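(* Let $T$ be a trigraph in $\mathcal F$ that is either the complement of a bipartite trigraph or the complement of a line trigraph. If $T$ is favorable, then either $T$ is a graph (has no switchable pair), or $T$ has an even pair disjoint from its switchable component.
   Context: A trigraph $T$ consists of a finite set $V(T)$ and a map $\theta:\binom{V(T)}{2}\to\{-1,0,1\}$. Two distinct vertices $u,v$ are strongly adjacent if $\theta(uv)=1$, strongly antiadjacent if $\theta(uv)=-1$, and semiadjacent (a switchable pair) if $\theta(uv)=0$; they are adjacent if $\theta(uv)\in\{0,1\}$ and antiadjacent if $\theta(uv)\in\{0,-1\}$. $N(v)$ is the set of vertices adjacent to $v$. The complement $\overline T$ has vertex set $V(T)$ and adjacency function $-\theta$. For $X\subseteq V(T)$, $T|X$ is the trigraph on $X$ with $\theta$ restricted, and $T\setminus X=T|(V(T)\setminus X)$. A clique (strong clique) is a set of pairwise adjacent (strongly adjacent) vertices; a strongly stable set is a set of pairwise strongly antiadjacent vertices. $T$ is a graph if it has no switchable pair. The full realization of $T$ is the graph on $V(T)$ whose edges are the adjacent pairs. A path is a sequence of distinct vertices $p_1,\dots,p_k$ such that $p_i,p_j$ are adjacent when $|i-j|=1$ and antiadjacent when $|i-j|>1$; its length is $k-1$. A hole of length $k\ge5$ consists of vertices $h_1,\dots,h_k$ with $h_i,h_j$ adjacent if $|i-j|\in\{1,k-1\}$ and antiadjacent otherwise; an antihole is an induced subtrigraph whose complement is a hole. $T$ is Berge if it contains no hole of odd length and no antihole of odd length. An even pair of $T$ is a strongly antiadjacent pair $\{u,v\}$ such that every path from $u$ to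 $v$ in $T$ has even length. $\Sigma(T)$ is the graph on $V(T)$ whose edges are the switchable pairs of $T$; a switchable component is a connected component of $\Sigma(T)$ with at least two vertices. $\mathcal F$ is the class of Berge trigraphs $T$ such that: (1) $T$ has at most one switchable component, and it has at most two edges; (2) if the switchable component has exactly one edge $xy$, then $N(x)\cap N(y)=\emptyset$ (it is called small); (3) if it has two edges, with $v$ the vertex of degree two in $\Sigma(T)$ and $x,y$ its neighbours, then $v$ is strongly anticomplete to $V(T)\setminus\{v,x,y\}$, $x$ is strongly antiadjacent to $y$, and $N(x)\cap N(y)=\{v\}$ (it is called light). For $T\in\mathcal F$, $D$ denotes the vertex set of its switchable component ($D=\emptyset$ if $T$ has no switchable pair). A pair $\{u,v\}$ is disjoint from the switchable component if $\{u,v\}\cap D=\emptyset$. A trigraph $T\in\mathcal F$ is favorable if (1) $|V(T)|\ge5$; (2) $T$ has a strongly antiadjacent pair $\{u,v\}$ disjoint from $D$; and (3) if $D=\{x,y\}$ is small, then at least one of $V(T)\setminus(D\cup N(x))$, $V(T)\setminus(D\cup N(y))$ is not a clique. $T$ is bipartite if $V(T)$ can be partitioned into two strongly stable sets. $T$ is a line trigraph if its full realization is the line graph of a bipartite graph and every clique of size at least $3$ in $T$ is a strong clique. $T$ is the complement of a bipartite (line) trigraph if $\overline T$ is a bipartite (line) trigraph. *)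

From mathcomp Require Import all_boot.
Set Implicit Arguments. Unset Strict Implicit. Unset Printing Implicit Defensive.

(* TAnti = -1, TSemi = 0, TStrong = 1 *)
Inductive tri := TAnti | TSemi | TStrong.

Definition tri_eqb (a b : tri) : bool :=
  match a, b with
  | TAnti, TAnti | TSemi, TSemi | TStrong, TStrong => true
  | _, _ => false end.

Section Trigraph.
Variable V : finType.
Implicit Type theta : V -> V -> tri.

(* theta is a map on unordered pairs: symmetric; diagonal values are ignored *)
Definition symmetric_tri theta := forall u v, theta u v = theta v u.

Definition tneg (a : tri) : tri :=
  match a with TAnti => TStrong | TSemi => TSemi | TStrong => TAnti end.

Definition complement theta : V -> V -> tri := fun u v => tneg (theta u v).

Definition strongly_adjacent theta (u v : V) : bool :=
  (u != v) && tri_eqb (theta u v) TStrong.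
Definition strongly_antiadjacent theta (u v : V) : bool :=
  (u != v) && tri_eqb (theta u v) TAnti.
Definition semiadjacent theta (u v : V) : bool :=
  (u != v) && tri_eqb (theta u v) TSemi.
Definition adjacent theta (u v : V) : bool :=
  (u != v) && ~~ tri_eqb (theta u v) TAnti.
Definition antiadjacent theta (u v : V) : bool :=
  (u != v) && ~~ tri_eqb (theta u v) TStrong.

Definition nbhd theta (v : V) : {set V} := [set w | adjacent theta v w].

Definition clique theta (S : {set V}) : Prop :=
  forall u v, u \in S -> v \in S -> u != v -> adjacent theta u v.
Definition strong_clique theta (S : {set V}) : Prop :=
  forall u v, u \in S -> v \in S -> u != v -> strongly_adjacent theta u v.
Definition strongly_stable theta (S : {set V}) : Prop :=
  forall u v, u \in S -> v \in S -> u != v -> strongly_antiadjacent theta u v.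

Definition is_graph theta : Prop := forall u v, ~~ semiadjacent theta u v.

Definition is_path theta (k : nat) (p : 'I_k.+1 -> V) : Prop :=
  injective p /\
  forall i j : 'I_k.+1,
    ((i.+1 == j :> nat) || (j.+1 == i :> nat) -> adjacent theta (p i) (p j)) /\
    (i.+1 < j \/ j.+1 < i -> antiadjacent theta (p i) (p j)).

Definition is_hole theta (k : nat) (h : 'I_k -> V) : Prop :=
  5 <= k /\ injective h /\
  forall i j : 'I_k, i != j ->
    (((i.+1 %% k == j) || (j.+1 %% k == i)) -> adjacent theta (h i) (h j)) /\
    (~~ ((i.+1 %% k == j) || (j.+1 %% k == i)) -> antiadjacent theta (h i) (h j)).

Definition is_antihole theta (k : nat) (h : 'I_k -> V) : Prop :=
  is_hole (complement theta) h.

Definition berge theta : Prop :=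
  forall (k : nat) (h : 'I_k -> V), odd k -> ~ is_hole theta h /\ ~ is_antihole theta h.

Definition even_pair theta (u v : V) : Prop :=
  strongly_antiadjacent theta u v /\
  forall (k : nat) (p : 'I_k.+1 -> V),
    is_path theta p -> p ord0 = u -> p ord_max = v -> ~~ odd k.

Definition sigma_rel theta : rel V := fun u v => semiadjacent theta u v.

(* vertices lying in a switchable component (= non-isolated vertices of Sigma) *)
Definition switch_verts theta : {set V} :=
  [set v | [exists u, semiadjacent theta u v]].

Definition switch_edges theta : {set {set V}} :=
  [set e | [exists u, exists v, (e == [set u; v]) && semiadjacent theta u v]].

Definition in_F theta : Prop :=
  berge theta /\
  (* (1) at most one switchable component, with at most two edges *)
  (forall u v, u \in switch_verts theta -> v \in switch_verts theta ->
      connect (sigma_rel theta) u v) /\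
  #|switch_edges theta| <= 2 /\
  (forall x y, switch_edges theta = [set [set x; y]] ->
      nbhd theta x :&: nbhd theta y = set0) /\
  (forall v x y, x != y ->
      switch_edges theta = [set [set v; x]; [set v; y]] ->
      (forall w, w \notin [set v; x; y] -> strongly_antiadjacent theta v w) /\
      strongly_antiadjacent theta x y /\
      nbhd theta x :&: nbhd theta y = [set v]).

Definition favorable theta : Prop :=
  5 <= #|V| /\
  (exists u v, [/\ strongly_antiadjacent theta u v,
                   u \notin switch_verts theta & v \notin switch_verts theta]) /\
  (forall x y, x != y -> switch_verts theta = [set x; y] ->
      ~ clique theta (~: (switch_verts theta :|: nbhd theta x)) \/
      ~ clique theta (~: (switch_verts theta :|: nbhd theta y))).

Definition bipartite_trigraph theta : Prop :=
  exists A : {set V}, strongly_stable theta A /\ strongly_stable theta (~: A).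

(* The full realization is the line graph of a bipartite graph H: vertices of
   T are identified (injectively) with edges (a, b) of H, a on the left side,
   b on the right side (both sides indexed by nat); two vertices are adjacent
   iff the edges share an endpoint. *)
Definition line_trigraph theta : Prop :=
  (exists f : V -> nat * nat, injective f /\
     forall u v, u != v ->
       (adjacent theta u v <-> ((f u).1 = (f v).1 \/ (f u).2 = (f v).2))) /\
  (forall S : {set V}, clique theta S -> 3 <= #|S| -> strong_clique theta S).

End Trigraph.

From mathcomp Require Import all_boot.
From Stdlib Require Import Classical Lia.
From mathcomp Require Import zify.
Set Implicit Arguments. Unset Strict Implicit. Unset Printing Implicit Defensive.

(* Since T is in F, its
   switchable component is either one edge xy (small) or two edges vx, vy
   (light).
   - Light: {v,x,y} is a triangle of the complement containing the switchable
     pair vx.  In a bipartite trigraph two of three vertices are strongly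
     antiadjacent, and in a line trigraph every triangle is strong; both are
     impossible here.
   - Small, complement bipartite: the non-neighbours of any vertex z form a
     clique of T, contradicting condition (3) of favorability.
   - Small, complement line: using the line-graph model one shows that, for
     z in {x,y}, both N(z) and its complement are stable sets of T.  So every
     path alternates between N(z) and V \ N(z), and two antiadjacent vertices
     outside N(z) -- provided by favorability -- form an even pair. *)

Section TrigraphFacts.
Variable V : finType.
Implicit Types (tau : V -> V -> tri) (u v : V).

Lemma complement_adjacent tau u v :
  adjacent (complement tau) u v = antiadjacent tau u v.
Proof. by rewrite /adjacent /antiadjacent /complement; case: (tau u v). Qed.

Lemma complement_strongly_adjacent tau u v :
  strongly_adjacent (complement tau) u v = strongly_antiadjacent tau u v.
Proof.
by rewrite /strongly_adjacent /strongly_antiadjacent /complement; case: (tau u v).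
Qed.

Lemma complement_strongly_antiadjacent tau u v :
  strongly_antiadjacent (complement tau) u v = strongly_adjacent tau u v.
Proof.
by rewrite /strongly_adjacent /strongly_antiadjacent /complement; case: (tau u v).
Qed.

Lemma complement_symmetric tau : symmetric_tri tau -> symmetric_tri (complement tau).
Proof. by move=> sym u v; rewrite /complement sym. Qed.

Lemma adjacent_sym tau u v : symmetric_tri tau -> adjacent tau u v = adjacent tau v u.
Proof. by move=> sym; rewrite /adjacent eq_sym sym. Qed.

Lemma semiadjacent_sym tau u v :
  symmetric_tri tau -> semiadjacent tau u v = semiadjacent tau v u.
Proof. by move=> sym; rewrite /semiadjacent eq_sym sym. Qed.

Lemma strongly_adjacent_adjacent tau u v :
  strongly_adjacent tau u v -> adjacent tau u v.
Proof. by rewrite /strongly_adjacent /adjacent; case/andP=> ->; case: (tau u v). Qed.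

Lemma semiadjacent_adjacent tau u v : semiadjacent tau u v -> adjacent tau u v.
Proof. by rewrite /semiadjacent /adjacent; case/andP=> ->; case: (tau u v). Qed.

Lemma semiadjacent_antiadjacent tau u v : semiadjacent tau u v -> antiadjacent tau u v.
Proof. by rewrite /semiadjacent /antiadjacent; case/andP=> ->; case: (tau u v). Qed.

Lemma strongly_antiadjacent_antiadjacent tau u v :
  strongly_antiadjacent tau u v -> antiadjacent tau u v.
Proof.
by rewrite /strongly_antiadjacent /antiadjacent; case/andP=> ->; case: (tau u v).
Qed.

Lemma nonadjacent_strongly_antiadjacent tau u v :
  u != v -> ~~ adjacent tau u v -> strongly_antiadjacent tau u v.
Proof. by rewrite /adjacent /strongly_antiadjacent => ->; case: (tau u v). Qed.

Lemma semiadjacent_not_strong tau u v :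
  semiadjacent tau u v -> ~~ strongly_adjacent tau u v /\ ~~ strongly_antiadjacent tau u v.
Proof.
by rewrite /semiadjacent /strongly_adjacent /strongly_antiadjacent;
  case/andP=> _; case: (tau u v); rewrite /= !andbF.
Qed.

Lemma strongly_antiadjacent_not_strong tau u v :
  strongly_antiadjacent tau u v -> ~~ strongly_adjacent tau u v.
Proof.
by rewrite /strongly_antiadjacent /strongly_adjacent; case/andP=> _; case: (tau u v) => //=;
  rewrite andbF.
Qed.

Lemma antiadjacentE tau u v :
  u != v -> antiadjacent tau u v = ~~ strongly_adjacent tau u v.
Proof. by rewrite /antiadjacent /strongly_adjacent => ->. Qed.

Lemma adjacent_not_semi_strong tau u v :
  adjacent tau u v -> ~~ semiadjacent tau u v -> strongly_adjacent tau u v.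
Proof.
by rewrite /adjacent /semiadjacent /strongly_adjacent; case/andP=> ->; case: (tau u v).
Qed.

(* In a bipartite trigraph, two of any three distinct vertices lie on the
   same side and are therefore strongly antiadjacent. *)
Lemma bipartite_triangle tau a b c :
  bipartite_trigraph tau -> a != b -> a != c -> b != c ->
  [\/ strongly_antiadjacent tau a b, strongly_antiadjacent tau a c
    | strongly_antiadjacent tau b c].
Proof.
move=> [A [stA stAC]] ab ac bc.
have same_side x y : (x \in A) = (y \in A) -> x != y -> strongly_antiadjacent tau x y.
  case xA: (x \in A) => yA xy; first by apply: stA; rewrite -?yA.
  by apply: stAC; rewrite ?inE ?xA -?yA.
have [ab_same|ab_diff] := eqVneq (a \in A) (b \in A).
  by apply: Or31; exact: same_side.
have [ac_same|ac_diff] := eqVneq (a \in A) (c \in A).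
  by apply: Or32; exact: same_side.
apply: Or33; apply: same_side => //.
by move: ab_diff ac_diff; case: (a \in A); case: (b \in A); case: (c \in A).
Qed.

Lemma line_triangle_strong tau a b c :
  symmetric_tri tau -> line_trigraph tau -> a != b -> a != c -> b != c ->
  adjacent tau a b -> adjacent tau a c -> adjacent tau b c ->
  strongly_adjacent tau a b.
Proof.
move=> sym [_ strong3] ab ac bc adj_ab adj_ac adj_bc.
have in3 x : x \in [set a; b; c] -> [\/ x = a, x = b | x = c].
  by rewrite !inE => /orP[/orP[]|] /eqP->; constructor.
apply: (strong3 [set a; b; c]); rewrite ?inE ?eqxx ?orbT //.
- by move=> x y /in3[]-> /in3[]->; rewrite ?eqxx // => _; rewrite adjacent_sym.
- have -> : [set a; b; c] = c |: [set a; b] by rewrite setUC.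
  by rewrite cardsU1 cards2 !inE negb_or ab ![c == _]eq_sym (negbTE ac) (negbTE bc).
Qed.

(* Along a path, a 2-colouring that splits every adjacent pair changes colour
   at every step, so the colours of the ends determine the parity. *)
Lemma path_parity tau (side : V -> bool) k (p : 'I_k.+1 -> V) :
  is_path tau p -> (forall a b, adjacent tau a b -> side a != side b) ->
  side (p ord_max) = side (p ord0) (+) odd k.
Proof.
move=> [_ pathP] split_adj.
suff step n : n <= k -> side (p (inord n)) = side (p ord0) (+) odd n.
  have -> : (ord_max : 'I_k.+1) = inord k by apply: val_inj; rewrite /= inordK.
  exact: step.
elim: n => [|n IH] le_nk.
  have -> : (inord 0 : 'I_k.+1) = ord0 by apply: val_inj; rewrite /= inordK.
  by rewrite addbF.
have adj_n : adjacent tau (p (inord n)) (p (inord n.+1)).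
  by apply: (pathP _ _).1; rewrite !inordK ?eqxx //; lia.
move: (split_adj _ _ adj_n); rewrite IH; last by lia.
rewrite /=; case: (side (p (inord n.+1))); case: (side (p ord0)); by case: (odd n).
Qed.

Lemma even_pair_of_bipartition tau (side : V -> bool) u w :
  (forall a b, adjacent tau a b -> side a != side b) ->
  u != w -> ~~ adjacent tau u w -> side u = side w -> even_pair tau u w.
Proof.
move=> split_adj uw nadj same; split; first exact: nonadjacent_strongly_antiadjacent.
move=> k p pathp p0 pk; have := path_parity pathp split_adj.
by rewrite p0 pk same; case: (side w); case: (odd k).
Qed.

End TrigraphFacts.

(* Edges (a,b) of a bipartite graph, seen as vertices of its line graph,
   are adjacent when they share an endpoint. *)
Definition shares (e f : nat * nat) : Prop := e.1 = f.1 \/ e.2 = f.2.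

(* If two edges u, v meeting an edge z do not meet each other, they meet z at
   different ends, so any further edge meeting z meets u or v. *)
Lemma shares_third_edge (z u v w : nat * nat) :
  shares u z -> shares v z -> ~ shares u v -> shares z w -> shares u w \/ shares v w.
Proof. case: z u v w => [z1 z2] [u1 u2] [v1 v2] [w1 w2]; rewrite /shares /=; lia. Qed.

Definition line_model (V : finType) (tau : V -> V -> tri) (f : V -> nat * nat) : Prop :=
  forall u v, u != v -> (adjacent tau u v <-> shares (f u) (f v)).

Section SymmetricTrigraph.
Variable V : finType.
Variable theta : V -> V -> tri.
Hypothesis sym : symmetric_tri theta.

Let csym : symmetric_tri (complement theta) := complement_symmetric sym.

(* A light switchable component cannot occur when the complement is
   bipartite or a line trigraph: {v,x,y} is a non-strong triangle of it. *)
Lemma light_component_impossible v x y :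
  bipartite_trigraph (complement theta) \/ line_trigraph (complement theta) ->
  x != y -> semiadjacent theta v x -> semiadjacent theta v y ->
  strongly_antiadjacent theta x y -> False.
Proof.
move=> [bip|line] xy vx vy xy_anti.
all: have vx_ne : v != x by case/andP: vx.
all: have vy_ne : v != y by case/andP: vy.
all: have [vx_strong vx_anti] := semiadjacent_not_strong vx.
- have [vy_strong _] := semiadjacent_not_strong vy.
  have xy_strong := strongly_antiadjacent_not_strong xy_anti.
  by case: (bipartite_triangle bip vx_ne vy_ne xy);
    rewrite !complement_strongly_antiadjacent ?(negbTE vx_strong) ?(negbTE vy_strong)
      ?(negbTE xy_strong).
- move/negP: vx_anti; apply; rewrite -complement_strongly_adjacent.
  apply: (line_triangle_strong csym line vx_ne vy_ne xy);
    rewrite complement_adjacent.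
  + exact: semiadjacent_antiadjacent.
  + exact: semiadjacent_antiadjacent.
  + exact: strongly_antiadjacent_antiadjacent.
Qed.

(* If the complement is bipartite, the non-neighbours of any vertex z form a
   clique: of u, w, z two must be strongly adjacent, and it is not z. *)
Lemma bipartite_nonneighbours_clique z :
  bipartite_trigraph (complement theta) -> clique theta (~: (z |: nbhd theta z)).
Proof.
move=> bip u w; rewrite !inE !negb_or => /andP[uz zu] /andP[wz zw] uw.
case: (bipartite_triangle bip uw uz wz); rewrite complement_strongly_antiadjacent.
- exact: strongly_adjacent_adjacent.
- by move/strongly_adjacent_adjacent; rewrite adjacent_sym // (negbTE zu).
- by move/strongly_adjacent_adjacent; rewrite adjacent_sym // (negbTE zw).
Qed.

Lemma semi_switch_verts c d : semiadjacent theta c d -> c \in switch_verts theta.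
Proof. by move=> cd; rewrite inE; apply/existsP; exists d; rewrite semiadjacent_sym. Qed.

Lemma nonneighbour_complement_adjacent z a :
  a != z -> ~~ adjacent theta z a -> adjacent (complement theta) a z.
Proof.
move=> az za; rewrite complement_adjacent strongly_antiadjacent_antiadjacent //.
by rewrite adjacent_sym // in za; exact: nonadjacent_strongly_antiadjacent.
Qed.

Section SmallLine.
Variables (z z' : V) (f : V -> nat * nat).
Hypothesis line : line_trigraph (complement theta).
Hypothesis model : line_model (complement theta) f.
Hypothesis zz' : semiadjacent theta z z'.
Hypothesis switch_in : switch_verts theta \subset [set z; z'].

Let zz'_ne : z != z'. Proof. by case/andP: zz'. Qed.

(* The edge f(z') misses f(a) for every non-neighbour a of z: otherwise
   {z, z', a} is a triangle of the complement through the switchable pair. *)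
Lemma nonneighbour_avoids_mate a :
  a != z -> ~~ adjacent theta z a -> ~ shares (f a) (f z').
Proof.
move=> az za.
have az' : a != z' by apply: contraNneq za => ->; exact: semiadjacent_adjacent.
move=> /(model az').2 a_z'.
have [_ /negP] := semiadjacent_not_strong zz'; apply.
rewrite -complement_strongly_adjacent.
apply: (line_triangle_strong (c := a) csym line zz'_ne).
- by rewrite eq_sym.
- by rewrite eq_sym.
- by rewrite complement_adjacent semiadjacent_antiadjacent.
- by rewrite adjacent_sym //; exact: nonneighbour_complement_adjacent.
- by rewrite adjacent_sym.
Qed.

(* The non-neighbours of z are pairwise antiadjacent.  Otherwise uv is a
   strong edge, so f(u), f(v) meet f(z) at different ends, and f(z') --
   meeting f(z) -- would meet f(u) or f(v). *)
Lemma line_nonneighbours_stable u v :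
  u \notin nbhd theta z -> v \notin nbhd theta z -> ~~ adjacent theta u v.
Proof.
rewrite !inE => zu zv; apply/negP => uv.
have uz : u != z by apply: contraNneq zv => <-.
have vz : v != z by apply: contraNneq zu => <-; rewrite adjacent_sym.
have uv_ne : u != v by case/andP: uv.
have uv_strong : strongly_adjacent theta u v.
  apply: adjacent_not_semi_strong => //; apply/negP => /semi_switch_verts.
  move/(subsetP switch_in); rewrite !inE (negbTE uz) /= => /eqP uz'.
  by apply: (nonneighbour_avoids_mate uz zu); rewrite uz'; left.
have not_uv : ~ shares (f u) (f v).
  by move=> /(model uv_ne).2; rewrite complement_adjacent antiadjacentE // uv_strong.
have zz'_share : shares (f z) (f z').
  by apply: (model zz'_ne).1; rewrite complement_adjacent semiadjacent_antiadjacent.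
case: (shares_third_edge ((model uz).1 (nonneighbour_complement_adjacent uz zu))
                         ((model vz).1 (nonneighbour_complement_adjacent vz zv))
                         not_uv zz'_share).
- exact: nonneighbour_avoids_mate uz zu.
- exact: nonneighbour_avoids_mate vz zv.
Qed.

End SmallLine.

(* If moreover N(z) and N(z') are disjoint, the neighbours of z are pairwise
   antiadjacent too: they are non-neighbours of z', and zz' is symmetric. *)
Lemma line_neighbours_stable z z' u v :
  line_trigraph (complement theta) -> semiadjacent theta z z' ->
  switch_verts theta \subset [set z; z'] ->
  nbhd theta z :&: nbhd theta z' = set0 ->
  u \in nbhd theta z -> v \in nbhd theta z -> ~~ adjacent theta u v.
Proof.
move=> line zz' switch_in disj zu zv.
have not_z' a : a \in nbhd theta z -> a \notin nbhd theta z'.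
  by move=> za; apply/negP => z'a; move/setP/(_ a): disj; rewrite in_setI za z'a inE.
have [[f [_ model]] _] := line.
apply: (@line_nonneighbours_stable z' z f) => //.
- by rewrite semiadjacent_sym.
- by rewrite setUC.
- exact: not_z'.
- exact: not_z'.
Qed.

(* Hence membership in N(z) is a 2-colouring splitting every adjacent pair,
   and two antiadjacent vertices outside N(z) form an even pair. *)
Lemma small_line_even_pair z z' :
  line_trigraph (complement theta) -> semiadjacent theta z z' ->
  switch_verts theta = [set z; z'] ->
  nbhd theta z :&: nbhd theta z' = set0 ->
  ~ clique theta (~: (switch_verts theta :|: nbhd theta z)) ->
  exists u v, [/\ u \notin switch_verts theta, v \notin switch_verts theta
                & even_pair theta u v].
Proof.
move=> line zz' verts disj not_clique.
have [[f [_ model]] _] := line.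
have switch_in : switch_verts theta \subset [set z; z'] by rewrite verts.
have split_adj a b : adjacent theta a b -> (a \in nbhd theta z) != (b \in nbhd theta z).
  move=> ab; case: (boolP (a \in nbhd theta z)); case: (boolP (b \in nbhd theta z)) => //.
  + by move=> zb za; case/negP: (line_neighbours_stable line zz' switch_in disj za zb).
  + by move=> zb za; case/negP: (line_nonneighbours_stable line model zz' switch_in za zb).
apply: NNPP => no_pair; apply: not_clique => u w u_in w_in uw.
apply: NNPP => /negP nadj; apply: no_pair; exists u, w.
move: u_in w_in; rewrite !in_setC !in_setU !negb_or => /andP[uD zu] /andP[wD zw].
split=> //; apply: (even_pair_of_bipartition split_adj uw nadj).
by rewrite (negbTE zu) (negbTE zw).
Qed.

Lemma bipartite_small_clique z :
  bipartite_trigraph (complement theta) -> z \in switch_verts theta ->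
  clique theta (~: (switch_verts theta :|: nbhd theta z)).
Proof.
move=> bip zD u w u_in w_in uw; apply: (@bipartite_nonneighbours_clique z bip) => //.
- move: u_in; rewrite !in_setC in_setU in_setU1 !negb_or => /andP[uD ->].
  by rewrite andbT; apply: contraNneq uD => ->.
- move: w_in; rewrite !in_setC in_setU in_setU1 !negb_or => /andP[wD ->].
  by rewrite andbT; apply: contraNneq wD => ->.
Qed.

Lemma semi_switch_edge c d : semiadjacent theta c d -> [set c; d] \in switch_edges theta.
Proof.
by move=> cd; rewrite inE; apply/existsP; exists c; apply/existsP; exists d; rewrite eqxx cd.
Qed.

Lemma switch_edgeP e :
  e \in switch_edges theta -> exists c d, e = [set c; d] /\ semiadjacent theta c d.
Proof. by rewrite inE => /existsP[c /existsP[d /andP[/eqP -> cd]]]; exists c, d. Qed.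

Lemma switch_verts_single_edge x y :
  semiadjacent theta x y -> switch_edges theta = [set [set x; y]] ->
  switch_verts theta = [set x; y].
Proof.
move=> xy edges; apply/setP => c; apply/idP/idP.
- rewrite inE => /existsP[d dc]; move: (semi_switch_edge dc).
  by rewrite edges inE => /eqP <-; rewrite !inE eqxx orbT.
- rewrite in_set2 => /orP[]/eqP->; first exact: semi_switch_verts xy.
  by apply: (semi_switch_verts (d := x)); rewrite semiadjacent_sym.
Qed.

(* If Sigma(T) is connected on its vertices and has exactly two edges, these
   edges share a vertex: otherwise the first edge would be a union of
   components of Sigma(T) missing the second one. *)
Lemma switch_edges_meet a b c d :
  (forall u v, u \in switch_verts theta -> v \in switch_verts theta ->
     connect (sigma_rel theta) u v) ->
  semiadjacent theta a b -> semiadjacent theta c d ->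
  switch_edges theta = [set [set a; b]; [set c; d]] ->
  exists2 w, w \in [set a; b] & w \in [set c; d].
Proof.
move=> conn ab cd edges; apply: NNPP => disjoint.
have outside t : t \in [set c; d] -> t \notin [set a; b].
  by move=> t_cd; apply/negP => t_ab; apply: disjoint; exists t.
have closed_ab : closed (sigma_rel theta) [set a; b].
  move=> s t st; move: (semi_switch_edge st); rewrite edges => /set2P[] e.
  - by rewrite -e !inE !eqxx ?orbT.
  - by rewrite !(negbTE (outside _ _)) // -e !inE eqxx ?orbT.
have := closed_connect closed_ab (conn a c (semi_switch_verts ab) (semi_switch_verts cd)).
rewrite !inE eqxx /= => c_ab.
by move: (outside c); rewrite !inE eqxx /= -c_ab => /(_ isT).
Qed.

Lemma switch_component_cases :
  in_F theta -> ~ is_graph theta ->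
  (exists x y, [/\ x != y, semiadjacent theta x y &
                   switch_edges theta = [set [set x; y]]]) \/
  (exists v x y, [/\ x != y, semiadjacent theta v x, semiadjacent theta v y &
                     switch_edges theta = [set [set v; x]; [set v; y]]]).
Proof.
move=> [_ [conn [card_edges _]]] not_graph.
have [a [b ab]] : exists a b, semiadjacent theta a b.
  apply: NNPP => no_semi; apply: not_graph => u v; apply/negP => uv.
  by apply: no_semi; exists u, v.
have [sub_ab|not_sub] := boolP (switch_edges theta \subset [set [set a; b]]).
  left; exists a, b; split=> //; first by case/andP: ab.
  by apply/eqP; rewrite eqEsubset sub_ab sub1set semi_switch_edge.
right; have [e2 e2_edge e2_ne] := subsetPn not_sub; rewrite inE in e2_ne.
have [c [d [e2E cd]]] := switch_edgeP e2_edge; subst e2.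
have edges : switch_edges theta = [set [set a; b]; [set c; d]].
  apply/esym/eqP; rewrite eqEcard cards2 eq_sym e2_ne card_edges andbT.
  by apply/subsetP => e /set2P[]->; [exact: semi_switch_edge | exact: e2_edge].
have [w w_ab w_cd] := switch_edges_meet conn ab cd edges.
have other s t : w \in [set s; t] -> semiadjacent theta s t ->
    exists x, [set s; t] = [set w; x] /\ semiadjacent theta w x.
  rewrite !inE => /orP[]/eqP-> st; first by exists t.
  by exists s; rewrite setUC semiadjacent_sym.
have [x [ab_wx wx]] := other _ _ w_ab ab.
have [y [cd_wy wy]] := other _ _ w_cd cd.
exists w, x, y; split=> //; last by rewrite edges ab_wx cd_wy.
by apply: contraNneq e2_ne => xy; rewrite ab_wx cd_wy xy.
Qed.

End SymmetricTrigraph.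

Theorem proposition4p8 (V : finType) (theta : V -> V -> tri) :
  symmetric_tri theta ->
  in_F theta ->
  (bipartite_trigraph (complement theta) \/ line_trigraph (complement theta)) ->
  favorable theta ->
  is_graph theta \/
  exists u v, [/\ u \notin switch_verts theta, v \notin switch_verts theta
                & even_pair theta u v].
Proof.
move=> sym inF bip_or_line [_ [_ fav_small]].
have [graph|not_graph] := classic (is_graph theta); [by left | right].
case: (switch_component_cases sym inF not_graph)
  => [[x [y [xy sxy edges]]] | [v [x [y [xy vx vy edges]]]]]; last first.
  have [_ [xy_anti _]] := inF.2.2.2.2 v x y xy edges.
  by case: (light_component_impossible sym bip_or_line xy vx vy xy_anti).
have verts := switch_verts_single_edge sym sxy edges.
have disj := inF.2.2.2.1 x y edges.
have [x_in y_in] : x \in switch_verts theta /\ y \in switch_verts theta.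
  by rewrite verts !inE !eqxx orbT.
case: bip_or_line => [bip|line].
  by case: (fav_small x y xy verts) => not_clique; case: not_clique;
    apply: bipartite_small_clique.
case: (fav_small x y xy verts) => not_clique.
  exact: (@small_line_even_pair _ _ sym x y line sxy verts disj not_clique).
apply: (@small_line_even_pair _ _ sym y x line _ _ _ not_clique).
- by rewrite semiadjacent_sym.
- by rewrite verts setUC.
- by rewrite setIC.
Qed.
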